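(* Let $q$ be a prime power. For any given integers $r>0$ and $\delta>0$ there exist a constant $c_{q,\delta,r}$ and an integer $n_0$ such that for every $n>n_0$, $\mathcal{C}_q(n,n-\delta,r)=c_{q,\delta,r}$.
   Context: For integers $n\ge k\ge r\ge 0$, a $q$-covering design $\mathcal{C}_q(n,k,r)$ is a collection $\mathbb{S}$ of $k$-dimensional subspaces of $\mathbb{F}_q^n$ such that every $r$-dimensional subspace of $\mathbb{F}_q^n$ is contained in at least one element of $\mathbb{S}$. $\mathcal{C}_q(n,k,r)$ denotes the minimum number of subspaces in such a design. *)

From HB Require Import structures.
From mathcomp Require Import all_boot all_order all_algebra all_field.
Set Implicit Arguments. Unset Strict Implicit. Unset Printing Implicit Defensive.
Import GRing.Theory.

Definition is_qcovering (F : finFieldType) (n k r : nat)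
    (S : seq {vspace 'rV[F]_n}) : Prop :=
  (forall V, V \in S -> \dim V = k) /\
  (forall U : {vspace 'rV[F]_n}, \dim U = r -> exists2 V, V \in S & (U <= V)%VS).

Definition qcov_number_is (F : finFieldType) (n k r m : nat) : Prop :=
  (exists S : seq {vspace 'rV[F]_n}, [/\ uniq S, is_qcovering k r S & size S = m]) /\
  (forall S : seq {vspace 'rV[F]_n}, uniq S -> is_qcovering k r S -> m <= size S).

From HB Require Import structures.
From mathcomp Require Import all_boot all_order all_algebra all_field.
From mathcomp Require Import zify.
From Stdlib Require Import ClassicalDescription.
Set Implicit Arguments. Unset Strict Implicit. Unset Printing Implicit Defensive.
Import GRing.Theory.

(* Write m(n) for C_q(n, n - delta, r).  It is well defined once
   r + delta <= n: the family of all (n - delta)-subspaces is a covering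
   design, and a least size exists by well-ordering.  The heart of the proof
   is that m is nonincreasing in n.  Identify F^(1+n) with F x F^n and lift a
   subspace V of F^n to  lift V = <e_0> + 0 x V,  which raises the dimension
   by one and so keeps the codimension delta.  Every subspace U of F^(1+n)
   lies in lift (pr U), where pr forgets the first coordinate; since pr U has
   dimension at most r, it extends to an r-subspace, so lifting a covering
   design C_q(n, k, r) elementwise gives a covering design C_q(1+n, k+1, r)
   of no larger size.  Finally, a nonincreasing sequence of naturals is
   eventually constant; it is phrased for a functional relation "the n-th
   term is m", so that m(n) need not be defined as a function. *)

Local Open Scope ring_scope.

Section SubspaceDimension.
Variables (K : fieldType) (vT : vectType K).

Lemma dim_addv_line (U : {vspace vT}) v :
  v \notin U -> \dim (U + <[v]>) = (\dim U).+1.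
Proof.
move=> vNU; have v_neq0 : v != 0 by apply: contraNneq vNU => ->; rewrite mem0v.
rewrite dimv_disjoint_sum ?dim_vline ?v_neq0 ?addn1 //.
apply/eqP; rewrite -subv0; apply/subvP => w /memv_capP [wU /vlineP [c wc]].
move: wU; rewrite wc memv0; have [-> | c_neq0] := eqVneq c 0; first by rewrite scale0r.
move=> cvU; case/negP: vNU; have := memvZ c^-1 cvU.
by rewrite scalerA mulVf // scale1r.
Qed.

Lemma subspace_extension (U : {vspace vT}) k :
  (\dim U <= k <= dim vT)%N -> exists2 V : {vspace vT}, (U <= V)%VS & \dim V = k.
Proof.
move=> /andP [Uk kvT]; move Ed : (k - \dim U)%N => d.
elim: d U Uk Ed => [|d IH] U Uk Ed.
  by exists U => //; apply/eqP; rewrite eqn_leq Uk /= -subn_eq0 Ed.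
have Ult : (\dim U < dim vT)%N by apply: leq_trans kvT; rewrite -subn_gt0 Ed.
have /subvPn [v _ vNU] : ~~ (fullv <= U)%VS.
  by apply: contraTN Ult => /dimvS; rewrite dimvf leqNgt.
have Uv_k : (\dim (U + <[v]>) <= k)%N by rewrite dim_addv_line // -subn_gt0 Ed.
have Uv_d : (k - \dim (U + <[v]>))%N = d by rewrite dim_addv_line // subnS Ed.
have [V UvV dV] := IH _ Uv_k Uv_d.
by exists V => //; apply: subv_trans UvV; apply: addvSl.
Qed.

End SubspaceDimension.

Section Lift.
Variables (K : fieldType) (n : nat).

(* F^(1+n) = F x F^n: the embedding of F^n as the last n coordinates, the
   projection forgetting the first coordinate, and the first unit vector. *)
Definition embed : 'Hom('rV[K]_n, 'rV[K]_(1 + n)) :=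
  linfun (mulmxr (row_mx 0 1%:M)).
Definition proj : 'Hom('rV[K]_(1 + n), 'rV[K]_n) :=
  linfun (mulmxr (col_mx 0 1%:M)).
Definition e0 : 'rV[K]_(1 + n) := row_mx 1%:M 0.

Definition lift (V : {vspace 'rV[K]_n}) : {vspace 'rV[K]_(1 + n)} :=
  (embed @: V + <[e0]>)%VS.

Lemma embedE v : embed v = row_mx 0 v.
Proof. by rewrite lfunE /= mul_mx_row mulmx0 mulmx1. Qed.

Lemma projE u : proj u = rsubmx u.
Proof. by rewrite lfunE /= -{1}(hsubmxK u) mul_row_col mulmx0 add0r mulmx1. Qed.

Lemma e0_embed_decomposition u : u = lsubmx u 0 0 *: e0 + embed (proj u).
Proof.
rewrite embedE projE /e0 scale_row_mx scaler0 add_row_mx addr0 add0r.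
by rewrite scalemx1 -mx11_scalar hsubmxK.
Qed.

Lemma lker_embed : lker embed = 0%VS.
Proof.
apply/eqP; rewrite -subv0; apply/subvP => v; rewrite memv_ker embedE memv0.
by move=> /eqP/(congr1 rsubmx); rewrite row_mxKr linear0 => ->.
Qed.

Lemma e0_notin_embed (V : {vspace 'rV[K]_n}) : e0 \notin (embed @: V)%VS.
Proof.
apply/memv_imgP => -[v _ /(congr1 lsubmx)]; rewrite embedE /e0 !row_mxKl.
by move/matrixP => /(_ 0 0); rewrite !mxE => /eqP; rewrite oner_eq0.
Qed.

Lemma dim_lift V : \dim (lift V) = (\dim V).+1.
Proof.
by rewrite dim_addv_line ?e0_notin_embed // limg_dim_eq // lker_embed capv0.
Qed.

Lemma liftS V W : (V <= W)%VS -> (lift V <= lift W)%VS.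
Proof. by move=> VW; rewrite addvS ?limgS. Qed.

Lemma subv_lift_proj (U : {vspace 'rV[K]_(1 + n)}) : (U <= lift (proj @: U))%VS.
Proof.
apply/subvP => u uU; rewrite (e0_embed_decomposition u) addrC.
by apply: memv_add; [apply/memv_img/memv_img | apply/memvZ/memv_line].
Qed.

End Lift.
Arguments embed {K n}.
Arguments proj {K n}.

Section CoveringDesigns.
Variable F : finFieldType.

Lemma all_subspaces_cover (n k r : nat) : (r <= k <= n)%N ->
  exists S : seq {vspace 'rV[F]_n}, uniq S /\ is_qcovering k r S.
Proof.
move=> /andP [rk kn].
exists (undup [seq V <- [seq <<enum A>>%VS | A : {set 'rV[F]_n}] | \dim V == k]).
split; first exact: undup_uniq.
split=> [V | U dU]; first by rewrite mem_undup mem_filter => /andP [/eqP].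
have [V UV dV] : exists2 V : {vspace 'rV[F]_n}, (U <= V)%VS & \dim V = k.
  by apply: subspace_extension; rewrite dU rk dim_matrix mul1r.
exists V => //; rewrite mem_undup mem_filter dV eqxx /=.
apply/mapP; exists [set x in vbasis V]; first by rewrite mem_enum.
rewrite -{1}(span_basis (vbasisP V)); apply: eq_span => x.
by rewrite mem_enum inE.
Qed.

Lemma lift_qcovering (n k r : nat) (S : seq {vspace 'rV[F]_n}) :
  (r <= n)%N -> is_qcovering k r S -> is_qcovering k.+1 r (map (@lift F n) S).
Proof.
move=> rn [dimS coverS]; split=> [_ /mapP [V VS ->] | U dU].
  by rewrite dim_lift dimS.
have [W UW dW] : exists2 W, (proj @: U <= W)%VS & \dim W = r.
  apply: subspace_extension; rewrite dim_matrix mul1r rn andbT.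
  by rewrite -dU -(limg_ker_dim proj U) leq_addl.
have [V VS WV] := coverS W dW.
exists (lift V); first exact: map_f.
by apply: subv_trans (subv_lift_proj U) (liftS (subv_trans UW WV)).
Qed.

End CoveringDesigns.

Local Close Scope ring_scope.

Lemma well_ordering (P : nat -> Prop) :
  (exists n, P n) -> exists2 n, P n & forall m, P m -> n <= m.
Proof.
pose p n := if excluded_middle_informative (P n) then true else false.
have pP n : reflect (P n) (p n).
  by rewrite /p; case: excluded_middle_informative => ?; constructor.
move=> [n Pn]; have ex_p : exists n, p n by exists n; apply/pP.
by case: (ex_minnP ex_p) => m /pP Pm m_min; exists m => // k /pP /m_min.
Qed.

Section CoveringNumber.
Variable F : finFieldType.

Lemma qcov_number_exists (n k r : nat) :
  r <= k <= n -> exists m, qcov_number_is F n k r m.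
Proof.
move=> rkn; pose covers m := exists S : seq {vspace 'rV[F]_n},
  [/\ uniq S, is_qcovering k r S & size S = m].
have [m cover_m m_min] : exists2 m, covers m & forall m', covers m' -> m <= m'.
  by apply: well_ordering; have [S [uS coverS]] := all_subspaces_cover F rkn;
    exists (size S), S.
by exists m; split=> // S uS coverS; apply: m_min; exists S.
Qed.

Lemma qcov_number_unique (n k r m m' : nat) :
  qcov_number_is F n k r m -> qcov_number_is F n k r m' -> m = m'.
Proof.
move=> [[S [uS coverS <-]] minS] [[T [uT coverT <-]] minT].
by apply/eqP; rewrite eqn_leq minS // minT.
Qed.

Lemma qcov_number_lift (n k r m m' : nat) : r <= n ->
  qcov_number_is F n k r m -> qcov_number_is F n.+1 k.+1 r m' -> m' <= m.
Proof.
move=> rn [[S [_ coverS <-]] _] [_ min'].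
apply: leq_trans (min' _ (undup_uniq (map (@lift F n) S)) _) _.
  have [dimS coverS'] := lift_qcovering rn coverS.
  split=> [V | U /coverS' [V VS UV]]; first by rewrite mem_undup; apply: dimS.
  by exists V; rewrite ?mem_undup.
by rewrite (leq_trans (size_undup _)) // size_map.
Qed.

End CoveringNumber.

Section EventuallyConstant.
Variables (R : nat -> nat -> Prop) (N0 : nat).
Hypothesis R_defined : forall n, N0 <= n -> exists m, R n m.
Hypothesis R_functional : forall n m m', R n m -> R n m' -> m = m'.
Hypothesis R_nonincreasing :
  forall n m m', N0 <= n -> R n m -> R n.+1 m' -> m' <= m.

Lemma nonincreasing_from a b ma mb :
  N0 <= a -> a <= b -> R a ma -> R b mb -> mb <= ma.
Proof.
move=> N0a; elim: b mb => [|b IH] mb.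
  by rewrite leqn0 => /eqP -> Ra /(R_functional Ra) ->.
rewrite leq_eqVlt => /orP [/eqP <- Ra /(R_functional Ra) -> // | ab Ra Rb].
have [mb' Rb'] := R_defined (leq_trans N0a ab).
exact: leq_trans (R_nonincreasing (leq_trans N0a ab) Rb' Rb) (IH mb' ab Ra Rb').
Qed.

(* The least value c taken from N0 on is taken at some n1, and from then on
   every value is both at most c (monotonicity) and at least c (minimality). *)
Lemma eventually_constant : exists c n1, forall n, n1 < n -> R n c.
Proof.
have [c [n1 N0n1 Rc] c_min] : exists2 c, exists2 n1, N0 <= n1 & R n1 c
    & forall m, (exists2 n, N0 <= n & R n m) -> c <= m.
  by apply: well_ordering; have [m Rm] := R_defined (leqnn N0); exists m, N0.
exists c, n1 => n /ltnW n1n; have N0n := leq_trans N0n1 n1n.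
have [m Rm] := R_defined N0n.
suff -> : c = m by [].
by apply/eqP; rewrite eqn_leq c_min ?(nonincreasing_from N0n1 n1n Rc Rm) //; exists n.
Qed.

End EventuallyConstant.

(* From n = r + delta on, C_q(n, n - delta, r) is defined, unique and
   nonincreasing. *)
Theorem mainTheorem1 (F : finFieldType) (r delta : nat) :
  0 < r -> 0 < delta ->
  exists c n0 : nat, forall n : nat, n0 < n -> qcov_number_is F n (n - delta) r c.
Proof.
move=> _ _.
apply: (@eventually_constant _ (r + delta)) => [n rdn | n m m' | n m m' rdn].
- by apply: qcov_number_exists; apply/andP; split; lia.
- exact: qcov_number_unique.
- have -> : n.+1 - delta = (n - delta).+1 by lia.
  by apply: qcov_number_lift; lia.
Qed.
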